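(* Let $s\ge0$. There is $C=C(s)$, independent of $M>0$ and $T>0$, such that for all $\omega,\tilde\omega\in C([0,T];\ell^2_s(\mathbb Z))$, $$\|\mathcal N_R[\omega]\|_{C_T\ell^2_s}\le CM\|\omega\|_{C_T\ell^2_s}^3,\qquad \|\mathcal N_R[\omega]-\mathcal N_R[\tilde\omega]\|_{C_T\ell^2_s}\le CM\big(\|\omega\|_{C_T\ell^2_s}^2+\|\tilde\omega\|_{C_T\ell^2_s}^2\big)\|\omega-\tilde\omega\|_{C_T\ell^2_s}.$$
   Context: $\langle n\rangle=(1+n^2)^{1/2}$, $\|\omega\|_{\ell^2_s}=\|\langle\cdot\rangle^s\omega\|_{\ell^2}$, $C_T\ell^2_s:=C([0,T];\ell^2_s(\mathbb Z))$ with norm $\sup_{t\in[0,T]}\|\omega(t)\|_{\ell^2_s}$, $\omega^*(n):=\overline{\omega(-n)}$. Notation $n_{ij\ldots}=n_i+n_j+\cdots$, $\hat n:=n-i\mathbf 1_{\{n=0\}}$; for $n=n_{123}$: $m_1:=2i\frac{nn_{23}}{\hat n_1\hat n_2}\mathbf 1_{\{n>0\}}\mathbf 1_{\{n_{23}<0\}}\mathbf 1_{\{n_3\ne0\}}$, $\tilde m_1:=m_1\mathbf 1_{\{n_{12}n_{13}\ne0\}}$, $\Phi:=n|n|-n_1|n_1|-n_2|n_2|-n_3|n_3|$. For $M>0$, $t\in[0,T]$: $$\mathcal N_R[\omega](t,n):=\sum_{n=n_{123},\ |\Phi|\le M}e^{it\Phi}\tilde m_1(n,n_1,n_2,n_3)\,\omega(t,n_1)\omega(t,n_2)\omega^*(t,n_3)\quad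 (n>0),$$ and $\mathcal N_R[\omega](t,n):=0$ for $n\le0$. *)

From Stdlib Require Import Reals ZArith List.
Open Scope R_scope.

Definition Cx : Type := (R * R)%type.
Definition C0 : Cx := (0, 0).
Definition Cadd (z w : Cx) : Cx := (fst z + fst w, snd z + snd w).
Definition Copp (z : Cx) : Cx := (- fst z, - snd z).
Definition Csub (z w : Cx) : Cx := Cadd z (Copp w).
Definition Cmul (z w : Cx) : Cx :=
  (fst z * fst w - snd z * snd w, fst z * snd w + snd z * fst w).
Definition Cconj (z : Cx) : Cx := (fst z, - snd z).
Definition Cnorm2 (z : Cx) : R := fst z * fst z + snd z * snd z.
Definition Cinv (z : Cx) : Cx := (fst z / Cnorm2 z, - snd z / Cnorm2 z).
Definition Cexpi (x : R) : Cx := (cos x, sin x).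

Definition zrange (K : nat) : list Z :=
  map (fun k => (Z.of_nat k - Z.of_nat K)%Z) (seq 0 (2 * K + 1)).
Definition zsum (K : nat) (f : Z -> R) : R := fold_right Rplus 0 (map f (zrange K)).
Definition Czsum (K : nat) (f : Z -> Cx) : Cx := fold_right Cadd C0 (map f (zrange K)).

Definition jbr2s (s : R) (n : Z) : R := Rpower (1 + IZR n ^ 2) s.

(* l2s_le s v A  <->  ||v||_{l^2_s} <= A  (in particular v in l^2_s):
   every partial sum of sum_n <n>^{2s} |v n|^2 is <= A^2. *)
Definition l2s_le (s : R) (v : Z -> Cx) (A : R) : Prop :=
  0 <= A /\ forall K : nat, zsum K (fun n => jbr2s s n * Cnorm2 (v n)) <= A ^ 2.

Definition in_CTl2s (s T : R) (w : R -> Z -> Cx) : Prop :=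
  (forall t, 0 <= t <= T -> exists A, l2s_le s (w t) A) /\
  (forall t, 0 <= t <= T -> forall eps, 0 < eps ->
     exists delta, 0 < delta /\
       forall t', 0 <= t' <= T -> Rabs (t' - t) < delta ->
         l2s_le s (fun n => Csub (w t' n) (w t n)) eps).

Definition star (v : Z -> Cx) (n : Z) : Cx := Cconj (v (- n)%Z).

Definition hatn (n : Z) : Cx := if Z.eqb n 0 then (0, -1) else (IZR n, 0).

Definition m1 (n n1 n2 n3 : Z) : Cx :=
  if (Z.ltb 0 n && Z.ltb (n2 + n3) 0 && negb (Z.eqb n3 0))%bool
  then Cmul (0, 2 * IZR (n * (n2 + n3))) (Cinv (Cmul (hatn n1) (hatn n2)))
  else C0.

Definition mt1 (n n1 n2 n3 : Z) : Cx :=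
  if Z.eqb ((n1 + n2) * (n1 + n3)) 0 then C0 else m1 n n1 n2 n3.

Definition Phi (n n1 n2 n3 : Z) : Z :=
  (n * Z.abs n - n1 * Z.abs n1 - n2 * Z.abs n2 - n3 * Z.abs n3)%Z.

Definition NR_term (M t : R) (v : Z -> Cx) (n n1 n2 : Z) : Cx :=
  let n3 := (n - n1 - n2)%Z in
  if Rle_dec (Rabs (IZR (Phi n n1 n2 n3))) M
  then Cmul (Cexpi (t * IZR (Phi n n1 n2 n3)))
         (Cmul (mt1 n n1 n2 n3) (Cmul (v n1) (Cmul (v n2) (star v n3))))
  else C0.

Definition NR_partial (M t : R) (v : Z -> Cx) (n : Z) (K : nat) : Cx :=
  Czsum K (fun n1 => Czsum K (fun n2 => NR_term M t v n n1 n2)).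

Definition Cx_cv (u : nat -> Cx) (l : Cx) : Prop :=
  Un_cv (fun K => fst (u K)) (fst l) /\ Un_cv (fun K => snd (u K)) (snd l).

Definition is_NR (M T : R) (w : R -> Z -> Cx) (N : R -> Z -> Cx) : Prop :=
  forall t, 0 <= t <= T -> forall n : Z,
    ((0 < n)%Z -> Cx_cv (NR_partial M t (w t) n) (N t n)) /\
    ((n <= 0)%Z -> N t n = C0).

From Stdlib Require Import Reals ZArith List Lra Lia Psatz ClassicalEpsilon.
Open Scope R_scope.

(* On the support of [mt1] one has [n1 > n], so [<n>^s <= <n1>^s], and the resonance
   constraint [|Phi| <= M] gives [|mt1| <= 4 M kernel_weight n n1 n2], a sum of three
   products [rho a * rho b] with [rho x = 1 / (1 + |x|)]. Since every interval sum of
   [rho ^ 2] is at most 3, Cauchy-Schwarz bounds the l^2 norm in [n] of each sum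
   [sum_(n1, n2) rho a rho b f(n1) g(n2) h(n3)] by [3 |f| |g| |h|], uniformly in the
   truncation box. This majorant also makes the box partial sums absolutely convergent,
   and the estimates pass to the limit; the difference estimate follows by trilinearity. *)

Fixpoint isum (a : Z) (n : nat) (f : Z -> R) : R :=
  match n with O => 0 | S k => f a + isum (a + 1)%Z k f end.

Lemma isum_ext a n f g : (forall i, (a <= i < a + Z.of_nat n)%Z -> f i = g i) ->
  isum a n f = isum a n g.
Proof.
  revert a; induction n as [|n IH]; intros a H; simpl; auto.
  rewrite (H a) by lia. rewrite (IH (a + 1)%Z); auto. intros i Hi; apply H; lia.
Qed.

Lemma isum_le a n f g : (forall i, (a <= i < a + Z.of_nat n)%Z -> f i <= g i) ->
  isum a n f <= isum a n g.
Proof.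
  revert a; induction n as [|n IH]; intros a H; simpl; [lra|].
  pose proof (H a ltac:(lia)). pose proof (IH (a + 1)%Z ltac:(intros i Hi; apply H; lia)). lra.
Qed.

Lemma isum_nonneg a n f : (forall i, 0 <= f i) -> 0 <= isum a n f.
Proof.
  intro H; revert a; induction n as [|n IH]; intros a; simpl; [lra|].
  pose proof (H a). pose proof (IH (a + 1)%Z). lra.
Qed.

Lemma isum_plus a n f g : isum a n (fun i => f i + g i) = isum a n f + isum a n g.
Proof. revert a; induction n as [|n IH]; intros a; simpl; [lra|]. rewrite IH. lra. Qed.

Lemma isum_minus a n f g : isum a n (fun i => f i - g i) = isum a n f - isum a n g.
Proof. revert a; induction n as [|n IH]; intros a; simpl; [lra|]. rewrite IH. lra. Qed.

Lemma isum_scal a n c f : isum a n (fun i => c * f i) = c * isum a n f.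
Proof. revert a; induction n as [|n IH]; intros a; simpl; [lra|]. rewrite IH. lra. Qed.

Lemma isum_0 a n : isum a n (fun _ => 0) = 0.
Proof. revert a; induction n as [|n IH]; intros a; simpl; [lra|]. rewrite IH. lra. Qed.

Lemma isum_split a p q f : isum a (p + q) f = isum a p f + isum (a + Z.of_nat p) q f.
Proof.
  revert a; induction p as [|p IH]; intros a; simpl.
  - replace (a + 0)%Z with a by lia. lra.
  - rewrite IH. replace (a + 1 + Z.of_nat p)%Z with (a + Z.pos (Pos.of_succ_nat p))%Z by lia. lra.
Qed.

Lemma isum_S_l a n f : isum a (S n) f = f a + isum (a + 1)%Z n f.
Proof. reflexivity. Qed.

Lemma isum_S_r a n f : isum a (S n) f = isum a n f + f (a + Z.of_nat n)%Z.
Proof. replace (S n) with (n + 1)%nat by lia. rewrite isum_split. simpl. lra. Qed.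

Lemma isum_shift a n c f : isum a n (fun x => f (x + c)%Z) = isum (a + c) n f.
Proof.
  revert a; induction n as [|n IH]; intros a; simpl; auto.
  rewrite IH. replace (a + 1 + c)%Z with (a + c + 1)%Z by lia. reflexivity.
Qed.

Lemma isum_reflect a n c f :
  isum a n (fun x => f (c - x)%Z) = isum (c - (a + Z.of_nat n) + 1) n f.
Proof.
  revert a; induction n as [|n IH]; intros a; [reflexivity|].
  change (f (c - a)%Z + isum (a + 1) n (fun x => f (c - x)%Z) =
          isum (c - (a + Z.of_nat (S n)) + 1) (S n) f).
  rewrite IH, isum_S_r.
  replace (c - (a + Z.of_nat (S n)) + 1 + Z.of_nat n)%Z with (c - a)%Z by lia.
  replace (c - (a + 1 + Z.of_nat n) + 1)%Z with (c - (a + Z.of_nat (S n)) + 1)%Z by lia.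
  lra.
Qed.

Lemma isum_swap a n b m (f : Z -> Z -> R) :
  isum a n (fun i => isum b m (fun j => f i j)) = isum b m (fun j => isum a n (fun i => f i j)).
Proof.
  revert a; induction n as [|n IH]; intros a; simpl.
  - rewrite isum_0; reflexivity.
  - rewrite IH, <- isum_plus. reflexivity.
Qed.

Lemma isum_telescope a n (g : Z -> R) :
  isum a n (fun x => g (x + 1)%Z - g x) = g (a + Z.of_nat n)%Z - g a.
Proof.
  revert a; induction n as [|n IH]; intros a; simpl.
  - replace (a + 0)%Z with a by lia. ring.
  - rewrite IH. replace (a + 1 + Z.of_nat n)%Z with (a + Z.pos (Pos.of_succ_nat n))%Z by lia. ring.
Qed.

Lemma quadratic_nonneg_discriminant P Q R0 :
  0 <= P -> (forall t, 0 <= t * t * P - 2 * t * R0 + Q) -> R0 * R0 <= P * Q.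
Proof.
  intros HP H.
  destruct (Req_dec P 0) as [->|HP0].
  - destruct (Req_dec R0 0) as [->|HR]; [lra|].
    pose proof (H ((Q + 1) / (2 * R0))) as Ht.
    replace (2 * ((Q + 1) / (2 * R0)) * R0) with (Q + 1) in Ht by (field; lra).
    pose proof (H 0). lra.
  - pose proof (H (R0 / P)) as Ht.
    replace (R0 / P * (R0 / P) * P - 2 * (R0 / P) * R0 + Q) with (Q - R0 * R0 / P) in Ht
      by (field; lra).
    apply (Rmult_le_compat_l P) in Ht; [|lra].
    replace (P * (Q - R0 * R0 / P)) with (P * Q - R0 * R0) in Ht by (field; lra). lra.
Qed.

Section CauchySchwarz.
Variables (I : Type) (S : (I -> R) -> R).
Hypotheses
  (S_ext : forall f g, (forall i, f i = g i) -> S f = S g)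
  (S_plus : forall f g, S (fun i => f i + g i) = S f + S g)
  (S_scal : forall c f, S (fun i => c * f i) = c * S f)
  (S_nonneg : forall f, (forall i, 0 <= f i) -> 0 <= S f).

Lemma Cauchy_Schwarz f g :
  S (fun i => f i * g i) ^ 2 <= S (fun i => f i ^ 2) * S (fun i => g i ^ 2).
Proof.
  rewrite <- Rsqr_pow2; unfold Rsqr.
  apply quadratic_nonneg_discriminant; [apply S_nonneg; intros; apply pow2_ge_0|].
  intros t.
  assert (H : 0 <= S (fun i => (t * f i - g i) ^ 2)) by (apply S_nonneg; intros; apply pow2_ge_0).
  rewrite (S_ext _ (fun i => (t * t) * f i ^ 2 + ((- (2 * t)) * (f i * g i) + g i ^ 2)))
    in H by (intros; ring).
  rewrite S_plus, S_scal, S_plus, S_scal in H. lra.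
Qed.

End CauchySchwarz.

Lemma isum_Cauchy_Schwarz a n f g :
  isum a n (fun i => f i * g i) ^ 2 <=
  isum a n (fun i => f i ^ 2) * isum a n (fun i => g i ^ 2).
Proof.
  apply (Cauchy_Schwarz Z (isum a n)).
  - intros; apply isum_ext; auto.
  - apply isum_plus.
  - apply isum_scal.
  - apply isum_nonneg.
Qed.

Lemma isum2_Cauchy_Schwarz a n b m (f g : Z -> Z -> R) :
  isum a n (fun i => isum b m (fun j => f i j * g i j)) ^ 2 <=
  isum a n (fun i => isum b m (fun j => f i j ^ 2)) *
  isum a n (fun i => isum b m (fun j => g i j ^ 2)).
Proof.
  refine (Cauchy_Schwarz (Z * Z) (fun F => isum a n (fun i => isum b m (fun j => F (i, j))))
            _ _ _ _ (fun p => f (fst p) (snd p)) (fun p => g (fst p) (snd p))).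
  - intros F G H; apply isum_ext; intros; apply isum_ext; auto.
  - intros F G; rewrite <- isum_plus; apply isum_ext; intros; apply isum_plus.
  - intros c F; rewrite <- isum_scal; apply isum_ext; intros; apply isum_scal.
  - intros F H; apply isum_nonneg; intros; apply isum_nonneg; auto.
Qed.

Lemma zsum_isum K f : zsum K f = isum (- Z.of_nat K) (2 * K + 1) f.
Proof.
  unfold zsum, zrange.
  assert (H : forall j m, fold_right Rplus 0 (map f (map (fun k => (Z.of_nat k - Z.of_nat K)%Z) (seq j m)))
                       = isum (Z.of_nat j - Z.of_nat K) m f).
  { intros j m; revert j; induction m as [|m IH]; intros j; simpl; auto.
    rewrite IH. f_equal. f_equal. lia. }
  apply H.
Qed.

Lemma zsum_ext K f g : (forall x, (Z.abs x <= Z.of_nat K)%Z -> f x = g x) -> zsum K f = zsum K g.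
Proof. intros H. rewrite !zsum_isum. apply isum_ext. intros; apply H; lia. Qed.

Lemma zsum_le K f g : (forall x, (Z.abs x <= Z.of_nat K)%Z -> f x <= g x) -> zsum K f <= zsum K g.
Proof. intros H. rewrite !zsum_isum. apply isum_le. intros; apply H; lia. Qed.

Lemma zsum_nonneg K f : (forall x, 0 <= f x) -> 0 <= zsum K f.
Proof. intros H. rewrite zsum_isum. apply isum_nonneg; auto. Qed.

Lemma zsum_plus K f g : zsum K (fun i => f i + g i) = zsum K f + zsum K g.
Proof. rewrite !zsum_isum. apply isum_plus. Qed.

Lemma zsum_minus K f g : zsum K (fun i => f i - g i) = zsum K f - zsum K g.
Proof. rewrite !zsum_isum. apply isum_minus. Qed.

Lemma zsum_scal K c f : zsum K (fun i => c * f i) = c * zsum K f.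
Proof. rewrite !zsum_isum. apply isum_scal. Qed.

Lemma zsum_S K f : zsum (S K) f = f (- Z.of_nat (S K))%Z + zsum K f + f (Z.of_nat (S K)).
Proof.
  rewrite !zsum_isum. replace (2 * S K + 1)%nat with (S (S (2 * K + 1))) by lia.
  rewrite isum_S_r, isum_S_l.
  replace (- Z.of_nat (S K) + 1)%Z with (- Z.of_nat K)%Z by lia.
  replace (- Z.of_nat (S K) + Z.of_nat (S (2 * K + 1)))%Z with (Z.of_nat (S K)) by lia.
  lra.
Qed.

Lemma zsum_S_le K f : (forall x, 0 <= f x) -> zsum K f <= zsum (S K) f.
Proof.
  intros H. rewrite zsum_S. pose proof (H (- Z.of_nat (S K))%Z). pose proof (H (Z.of_nat (S K))). lra.
Qed.

Lemma zsum_S_restrict K f :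
  zsum (S K) (fun x => if (Z.abs x <=? Z.of_nat K)%Z then f x else 0) = zsum K f.
Proof.
  rewrite zsum_S, !(proj2 (Z.leb_gt _ _)) by lia.
  rewrite (zsum_ext K _ f); [lra|].
  intros x Hx. rewrite (proj2 (Z.leb_le _ _)) by lia. reflexivity.
Qed.

Lemma zsum_term_le K f x : (forall x, 0 <= f x) -> (Z.abs x <= Z.of_nat K)%Z -> f x <= zsum K f.
Proof.
  intros Hf Hx. rewrite zsum_isum.
  set (p := Z.to_nat (x + Z.of_nat K)).
  replace (2 * K + 1)%nat with (p + S (2 * K - p))%nat by lia.
  rewrite isum_split, isum_S_l.
  replace (- Z.of_nat K + Z.of_nat p)%Z with x by lia.
  pose proof (isum_nonneg (- Z.of_nat K) p f Hf).
  pose proof (isum_nonneg (x + 1) (2 * K - p) f Hf). lra.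
Qed.

Definition sums_bounded (f : Z -> R) (X : R) : Prop := forall a n, isum a n f <= X.

Lemma sums_bounded_nonneg f X : sums_bounded f X -> 0 <= X.
Proof. intros H. exact (H 0%Z 0%nat). Qed.

Lemma sums_bounded_of_zsum f X :
  (forall x, 0 <= f x) -> (forall K, zsum K f <= X) -> sums_bounded f X.
Proof.
  intros Hf H a n.
  set (K := (Z.to_nat (Z.abs a) + n)%nat). set (p := Z.to_nat (a + Z.of_nat K)).
  specialize (H K). rewrite zsum_isum in H.
  replace (2 * K + 1)%nat with (p + (n + (2 * K + 1 - p - n)))%nat in H by lia.
  rewrite isum_split, isum_split in H.
  replace (- Z.of_nat K + Z.of_nat p)%Z with a in H by lia.
  pose proof (isum_nonneg (- Z.of_nat K) p f Hf).
  pose proof (isum_nonneg (a + Z.of_nat n) (2 * K + 1 - p - n) f Hf). lra.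
Qed.

Lemma sums_bounded_shift f X c : sums_bounded f X -> sums_bounded (fun x => f (x + c)%Z) X.
Proof. intros H a n. rewrite isum_shift. apply H. Qed.

Lemma sums_bounded_reflect f X c : sums_bounded f X -> sums_bounded (fun x => f (c - x)%Z) X.
Proof. intros H a n. rewrite isum_reflect. apply H. Qed.

Lemma sums_bounded_sub f X c : sums_bounded f X -> sums_bounded (fun x => f (x - c)%Z) X.
Proof.
  intros H a n. rewrite (isum_ext _ _ _ (fun x => f (x + - c)%Z)) by (intros; f_equal; lia).
  apply sums_bounded_shift, H.
Qed.

Lemma isum_mul_le a n f X c Y : (forall x, 0 <= f x) -> sums_bounded f X -> 0 <= c -> c <= Y ->
  isum a n (fun i => f i * c) <= X * Y.
Proof.
  intros Hf HB Hc HY.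
  rewrite (isum_ext _ _ _ (fun i => c * f i)) by (intros; ring). rewrite isum_scal.
  pose proof (HB a n). pose proof (sums_bounded_nonneg _ _ HB). pose proof (isum_nonneg a n f Hf). nra.
Qed.

Definition rho (x : Z) : R := / (1 + IZR (Z.abs x)).

(* A primitive of [rho ^ 2] with values in [0, 3]. *)
Definition rho2_primitive (x : Z) : R := if (x <=? 0)%Z then / (1 - IZR x) else 3 - / IZR x.

Lemma rho_pos x : 0 < rho x.
Proof. unfold rho. apply Rinv_0_lt_compat. pose proof (IZR_le _ _ (Z.abs_nonneg x)). lra. Qed.

Lemma inv_sqr_le_inv_sub y : 1 <= y -> / (1 + y) ^ 2 <= / y - / (y + 1).
Proof.
  intros Hy. replace (/ y - / (y + 1)) with (/ (y * (y + 1))) by (field; lra).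
  apply Rinv_le_contravar; nra.
Qed.

Lemma rho2_le_primitive_step x : rho x ^ 2 <= rho2_primitive (x + 1) - rho2_primitive x.
Proof.
  unfold rho, rho2_primitive. rewrite pow_inv.
  destruct (Z.le_gt_cases x (-1)) as [h|h].
  - rewrite !(proj2 (Z.leb_le _ _)) by lia.
    rewrite Z.abs_neq, plus_IZR, opp_IZR by lia.
    assert (IZR x <= -1) by (apply (IZR_le x (-1)); lia).
    replace (1 - (IZR x + 1)) with (- IZR x) by ring.
    replace (1 - IZR x) with (- IZR x + 1) by ring.
    apply inv_sqr_le_inv_sub. lra.
  - destruct (Z.eq_dec x 0) as [->|hx].
    + simpl. replace ((1 + 0) ^ 2) with 1 by ring. replace (1 - 0) with 1 by ring.
      rewrite Rinv_1. lra.
    + rewrite !(proj2 (Z.leb_gt _ _)) by lia.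
      rewrite Z.abs_eq, plus_IZR by lia.
      assert (1 <= IZR x) by (apply IZR_le; lia).
      pose proof (inv_sqr_le_inv_sub (IZR x) H). rewrite (Rplus_comm 1) in *. lra.
Qed.

Lemma rho2_primitive_bounds x : 0 <= rho2_primitive x <= 3.
Proof.
  unfold rho2_primitive. destruct (Z.leb_spec x 0) as [E|E].
  - apply IZR_le in E.
    assert (/ (1 - IZR x) <= / 1) by (apply Rinv_le_contravar; lra).
    pose proof (Rinv_0_lt_compat (1 - IZR x) ltac:(lra)). rewrite Rinv_1 in *. lra.
  - assert (1 <= IZR x) by (apply IZR_le; lia).
    assert (/ IZR x <= / 1) by (apply Rinv_le_contravar; lra).
    pose proof (Rinv_0_lt_compat (IZR x) ltac:(lra)). rewrite Rinv_1 in *. lra.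
Qed.

Lemma sums_bounded_rho2 : sums_bounded (fun x => rho x ^ 2) 3.
Proof.
  intros a n. eapply Rle_trans.
  - apply isum_le. intros i _. apply rho2_le_primitive_step.
  - rewrite isum_telescope.
    pose proof (rho2_primitive_bounds (a + Z.of_nat n)). pose proof (rho2_primitive_bounds a). lra.
Qed.

Lemma isum2_mul_le a1 m1 a2 m2 u v U V :
  (forall x, 0 <= u x) -> (forall x, 0 <= v x) -> sums_bounded u U -> sums_bounded v V ->
  isum a1 m1 (fun i => isum a2 m2 (fun j => u i * v j)) <= U * V.
Proof.
  intros Hu Hv HU HV.
  rewrite (isum_ext _ _ _ (fun i => u i * isum a2 m2 v)) by (intros; apply isum_scal).
  apply isum_mul_le; auto. apply isum_nonneg; auto.
Qed.

Lemma isum2_rho2_le a1 m1 a2 m2 :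
  isum a1 m1 (fun i => isum a2 m2 (fun j => (rho i * rho j) ^ 2)) <= 9.
Proof.
  replace 9 with (3 * 3) by ring.
  rewrite (isum_ext _ _ _ (fun i => isum a2 m2 (fun j => rho i ^ 2 * rho j ^ 2)))
    by (intros; apply isum_ext; intros; ring).
  apply isum2_mul_le; auto using sums_bounded_rho2; intros; apply pow2_ge_0.
Qed.

Definition kernel_weight (n i j : Z) : R :=
  rho i * rho j + rho j * rho (n - j)%Z + rho (n - i - j)%Z * rho (i + j)%Z.

Lemma kernel_weight_nonneg n i j : 0 <= kernel_weight n i j.
Proof.
  unfold kernel_weight.
  pose proof (rho_pos i). pose proof (rho_pos j). pose proof (rho_pos (n - j)).
  pose proof (rho_pos (n - i - j)). pose proof (rho_pos (i + j)). nra.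
Qed.

Lemma sqr_sum3_le x y z : (x + y + z) ^ 2 <= 3 * (x ^ 2 + y ^ 2 + z ^ 2).
Proof.
  pose proof (pow2_ge_0 (x - y)). pose proof (pow2_ge_0 (x - z)). pose proof (pow2_ge_0 (y - z)). nra.
Qed.

Section Trilinear.
Variables (f g h : Z -> R) (F G H : R).
Hypotheses (HF : sums_bounded (fun x => f x ^ 2) F) (HG : sums_bounded (fun x => g x ^ 2) G)
  (HH : sums_bounded (fun x => h x ^ 2) H).
Variables (a a1 a2 : Z) (m m1 m2 : nat).

Definition trilinear (k : Z -> Z -> Z -> R) (n : Z) : R :=
  isum a1 m1 (fun i => isum a2 m2 (fun j => k n i j * (f i * g j * h (n - i - j)%Z))).

#[local] Hint Resolve pow2_ge_0 : core.
Let F_ge0 := sums_bounded_nonneg _ _ HF.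
Let G_ge0 := sums_bounded_nonneg _ _ HG.
Let H_ge0 := sums_bounded_nonneg _ _ HH.

Lemma trilinear_rho_i_rho_j :
  isum a m (fun n => trilinear (fun _ i j => rho i * rho j) n ^ 2) <= 9 * (F * G * H).
Proof.
  apply Rle_trans with
    (isum a m (fun n => 9 * isum a1 m1 (fun i => isum a2 m2 (fun j => (f i * g j * h (n - i - j)%Z) ^ 2)))).
  { apply isum_le; intros n _. eapply Rle_trans; [apply isum2_Cauchy_Schwarz|].
    apply Rmult_le_compat_r; [|apply isum2_rho2_le].
    apply isum_nonneg; intros; apply isum_nonneg; auto. }
  rewrite isum_scal. apply Rmult_le_compat_l; [lra|]. rewrite isum_swap.
  apply Rle_trans with (isum a1 m1 (fun i => f i ^ 2 * (isum a2 m2 (fun j => g j ^ 2) * H))).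
  - apply isum_le; intros i _. rewrite isum_swap.
    apply Rle_trans with (isum a2 m2 (fun j => f i ^ 2 * g j ^ 2 * H)).
    + apply isum_le; intros j _.
      rewrite (isum_ext _ _ _ (fun n => f i ^ 2 * g j ^ 2 * h (n - (i + j))%Z ^ 2))
        by (intros; rewrite Z.sub_add_distr; ring).
      rewrite isum_scal. apply Rmult_le_compat_l; [apply Rmult_le_pos; auto|].
      exact (sums_bounded_sub _ _ (i + j) HH a m).
    + right. rewrite (isum_ext _ _ _ (fun j => f i ^ 2 * H * g j ^ 2)) by (intros; ring).
      rewrite isum_scal. ring.
  - rewrite Rmult_assoc. apply isum_mul_le; auto.
    + apply Rmult_le_pos; auto. apply isum_nonneg; auto.
    + apply Rmult_le_compat_r; auto.
Qed.

Lemma trilinear_rho_j_rho_nj :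
  isum a m (fun n => trilinear (fun n _ j => rho j * rho (n - j)%Z) n ^ 2) <= 9 * (F * G * H).
Proof.
  apply Rle_trans with
    (isum a m (fun n => 3 * (F * H) * isum a2 m2 (fun j => g j ^ 2 * rho (n - j)%Z ^ 2))).
  { apply isum_le; intros n _. unfold trilinear. rewrite isum_swap.
    rewrite (isum_ext _ _ _ (fun j => rho j *
        (rho (n - j)%Z * g j * isum a1 m1 (fun i => f i * h (n - i - j)%Z))))
      by (intros; rewrite <- !isum_scal; apply isum_ext; intros; ring).
    eapply Rle_trans; [apply isum_Cauchy_Schwarz|].
    rewrite Rmult_assoc.
    apply Rmult_le_compat; [apply isum_nonneg; auto | apply isum_nonneg; auto
                           | apply sums_bounded_rho2 |].
    rewrite <- isum_scal. apply isum_le; intros j _.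
    assert (Hfh : isum a1 m1 (fun i => f i * h (n - i - j)%Z) ^ 2 <= F * H).
    { eapply Rle_trans; [apply isum_Cauchy_Schwarz|].
      apply Rmult_le_compat; [apply isum_nonneg; auto | apply isum_nonneg; auto | apply HF |].
      rewrite (isum_ext _ _ _ (fun i => h (n - j - i)%Z ^ 2)) by (intros; do 2 f_equal; lia).
      exact (sums_bounded_reflect _ _ (n - j) HH a1 m1). }
    rewrite Rpow_mult_distr, Rpow_mult_distr.
    replace (F * H * (g j ^ 2 * rho (n - j)%Z ^ 2)) with (rho (n - j)%Z ^ 2 * g j ^ 2 * (F * H)) by ring.
    apply Rmult_le_compat_l; [apply Rmult_le_pos; auto | exact Hfh]. }
  rewrite isum_scal. replace (9 * (F * G * H)) with (3 * (F * H) * (G * 3)) by ring.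
  apply Rmult_le_compat_l; [apply Rmult_le_pos; [lra | apply Rmult_le_pos; auto]|].
  rewrite isum_swap.
  rewrite (isum_ext _ _ _ (fun j => g j ^ 2 * isum a m (fun n => rho (n - j)%Z ^ 2)))
    by (intros; apply isum_scal).
  apply Rle_trans with (isum a2 m2 (fun j => g j ^ 2 * 3)); [|apply isum_mul_le; auto; lra].
  apply isum_le; intros j _. apply Rmult_le_compat_l; auto.
  exact (sums_bounded_sub _ _ j sums_bounded_rho2 a m).
Qed.

Lemma trilinear_rho_l_rho_ij :
  isum a m (fun n => trilinear (fun n i j => rho (n - i - j)%Z * rho (i + j)%Z) n ^ 2)
    <= 9 * (F * G * H).
Proof.
  apply Rle_trans with (isum a m (fun n => 3 * G *
     isum a1 m1 (fun i => isum a2 m2 (fun j => (rho (i + j)%Z * f i * h (n - i - j)%Z) ^ 2)))).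
  { apply isum_le; intros n _. unfold trilinear.
    rewrite (isum_ext _ _ _ (fun i => isum a2 m2 (fun j => (rho (n - i - j)%Z * g j) *
       (rho (i + j)%Z * f i * h (n - i - j)%Z)))) by (intros; apply isum_ext; intros; ring).
    eapply Rle_trans; [apply isum2_Cauchy_Schwarz|].
    apply Rmult_le_compat_r; [apply isum_nonneg; intros; apply isum_nonneg; auto|].
    rewrite isum_swap.
    apply Rle_trans with (isum a2 m2 (fun j => g j ^ 2 * 3));
      [|rewrite (Rmult_comm 3); apply isum_mul_le; auto; lra].
    apply isum_le; intros j _.
    rewrite (isum_ext _ _ _ (fun i => g j ^ 2 * rho (n - j - i)%Z ^ 2))
      by (intros; replace (n - j - i)%Z with (n - i - j)%Z by lia; ring).
    rewrite isum_scal. apply Rmult_le_compat_l; auto.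
    exact (sums_bounded_reflect _ _ (n - j) sums_bounded_rho2 a1 m1). }
  rewrite isum_scal. replace (9 * (F * G * H)) with (3 * G * (F * (3 * H))) by ring.
  apply Rmult_le_compat_l; [lra|].
  rewrite isum_swap.
  apply Rle_trans with (isum a1 m1 (fun i => f i ^ 2 * (3 * H)));
    [|apply isum_mul_le; auto; lra].
  apply isum_le; intros i _. rewrite isum_swap.
  apply Rle_trans with (isum a2 m2 (fun j => rho (j + i)%Z ^ 2 * (f i ^ 2 * H))).
  2:{ replace (f i ^ 2 * (3 * H)) with (3 * (f i ^ 2 * H)) by ring.
      apply isum_mul_le; [auto | exact (sums_bounded_shift _ _ i sums_bounded_rho2)
                         | apply Rmult_le_pos; auto | lra]. }
  apply isum_le; intros j _.
  rewrite (isum_ext _ _ _ (fun n => (rho (j + i)%Z ^ 2 * f i ^ 2) * h (n - (i + j))%Z ^ 2))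
    by (intros; rewrite (Z.add_comm j i), Z.sub_add_distr; ring).
  rewrite isum_scal, <- Rmult_assoc. apply Rmult_le_compat_l; [apply Rmult_le_pos; auto|].
  exact (sums_bounded_sub _ _ (i + j) HH a m).
Qed.

Lemma trilinear_kernel_weight :
  isum a m (fun n => trilinear kernel_weight n ^ 2) <= 81 * (F * G * H).
Proof.
  pose proof trilinear_rho_i_rho_j as E1.
  pose proof trilinear_rho_j_rho_nj as E2.
  pose proof trilinear_rho_l_rho_ij as E3.
  set (T1 := trilinear (fun _ i j => rho i * rho j)) in *.
  set (T2 := trilinear (fun n _ j => rho j * rho (n - j)%Z)) in *.
  set (T3 := trilinear (fun n i j => rho (n - i - j)%Z * rho (i + j)%Z)) in *.
  apply Rle_trans with (isum a m (fun n => 3 * (T1 n ^ 2 + T2 n ^ 2 + T3 n ^ 2))).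
  - apply isum_le; intros n _.
    replace (trilinear kernel_weight n) with (T1 n + T2 n + T3 n).
    2:{ unfold T1, T2, T3, trilinear. rewrite <- !isum_plus. apply isum_ext; intros.
        rewrite <- !isum_plus. apply isum_ext; intros. unfold kernel_weight. ring. }
    apply sqr_sum3_le.
  - rewrite isum_scal, !isum_plus. lra.
Qed.

End Trilinear.

Definition cabs (z : Cx) : R := sqrt (Cnorm2 z).

Lemma Cnorm2_nonneg z : 0 <= Cnorm2 z.
Proof. unfold Cnorm2. nra. Qed.

Lemma cabs_nonneg z : 0 <= cabs z.
Proof. apply sqrt_pos. Qed.

Lemma cabs_sq z : cabs z ^ 2 = Cnorm2 z.
Proof. unfold cabs. rewrite <- Rsqr_pow2. apply Rsqr_sqrt, Cnorm2_nonneg. Qed.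

Lemma cabs_mul z w : cabs (Cmul z w) = cabs z * cabs w.
Proof.
  unfold cabs. rewrite <- sqrt_mult by apply Cnorm2_nonneg. f_equal.
  destruct z, w; unfold Cnorm2, Cmul; simpl; ring.
Qed.

Lemma cabs_conj z : cabs (Cconj z) = cabs z.
Proof. unfold cabs. f_equal. destruct z; unfold Cnorm2, Cconj; simpl; ring. Qed.

Lemma cabs_expi x : cabs (Cexpi x) = 1.
Proof.
  unfold cabs, Cnorm2, Cexpi; simpl. rewrite <- sqrt_1. f_equal.
  pose proof (sin2_cos2 x). unfold Rsqr in *. lra.
Qed.

Lemma cabs_C0 : cabs C0 = 0.
Proof. unfold cabs, Cnorm2, C0; simpl. replace (0 * 0 + 0 * 0) with 0 by ring. apply sqrt_0. Qed.

Lemma cabs_im y : cabs (0, y) = Rabs y.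
Proof. unfold cabs, Cnorm2; simpl. rewrite <- sqrt_Rsqr_abs. f_equal. unfold Rsqr; ring. Qed.

Lemma cabs_inv z : 0 < Cnorm2 z -> cabs (Cinv z) = / cabs z.
Proof.
  intros H. unfold cabs. rewrite <- sqrt_inv. f_equal.
  destruct z as [x y]; unfold Cinv, Cnorm2 in *; simpl in *. field. lra.
Qed.

Lemma Rabs_fst_le_cabs z : Rabs (fst z) <= cabs z.
Proof.
  destruct z as [x y]; unfold cabs, Cnorm2; simpl.
  rewrite <- sqrt_Rsqr_abs. apply sqrt_le_1_alt. unfold Rsqr; nra.
Qed.

Lemma Rabs_snd_le_cabs z : Rabs (snd z) <= cabs z.
Proof.
  destruct z as [x y]; unfold cabs, Cnorm2; simpl.
  rewrite <- sqrt_Rsqr_abs. apply sqrt_le_1_alt. unfold Rsqr; nra.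
Qed.

Lemma cabs_add z w : cabs (Cadd z w) <= cabs z + cabs w.
Proof.
  pose proof (cabs_nonneg z). pose proof (cabs_nonneg w).
  assert (Hre : fst (Cmul z (Cconj w)) <= cabs z * cabs w).
  { rewrite <- cabs_conj with (z := w), <- cabs_mul.
    eapply Rle_trans; [apply Rle_abs | apply Rabs_fst_le_cabs]. }
  apply Rsqr_incr_0_var; [|lra]. unfold Rsqr.
  replace (cabs (Cadd z w) * cabs (Cadd z w)) with (Cnorm2 (Cadd z w)) by (rewrite <- cabs_sq; ring).
  replace (Cnorm2 (Cadd z w)) with (Cnorm2 z + Cnorm2 w + 2 * fst (Cmul z (Cconj w)))
    by (destruct z, w; unfold Cnorm2, Cadd, Cmul, Cconj; simpl; ring).
  rewrite <- !cabs_sq. nra.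
Qed.

Lemma cabs_Czsum K f : cabs (Czsum K f) <= zsum K (fun x => cabs (f x)).
Proof.
  unfold Czsum, zsum. induction (zrange K) as [|a l IH]; simpl.
  - rewrite cabs_C0; lra.
  - eapply Rle_trans; [apply cabs_add | lra].
Qed.

Lemma fst_Czsum K f : fst (Czsum K f) = zsum K (fun x => fst (f x)).
Proof. unfold Czsum, zsum. induction (zrange K); simpl; auto. rewrite IHl; auto. Qed.

Lemma snd_Czsum K f : snd (Czsum K f) = zsum K (fun x => snd (f x)).
Proof. unfold Czsum, zsum. induction (zrange K); simpl; auto. rewrite IHl; auto. Qed.

Lemma Czsum_ext K f g : (forall x, f x = g x) -> Czsum K f = Czsum K g.
Proof. intros H. unfold Czsum. f_equal. apply map_ext. auto. Qed.

Lemma Csub_Czsum K f g : Csub (Czsum K f) (Czsum K g) = Czsum K (fun x => Csub (f x) (g x)).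
Proof.
  unfold Czsum. induction (zrange K) as [|a l IH]; simpl.
  - unfold Csub, Cadd, Copp, C0; simpl; f_equal; ring.
  - rewrite <- IH. destruct (f a), (g a), (fold_right Cadd C0 (map f l)), (fold_right Cadd C0 (map g l)).
    unfold Csub, Cadd, Copp; simpl; f_equal; ring.
Qed.

Lemma Csub_Cmul3 a b c a' b' c' :
  Csub (Cmul a (Cmul b c)) (Cmul a' (Cmul b' c')) =
  Cadd (Cmul (Csub a a') (Cmul b c))
   (Cadd (Cmul a' (Cmul (Csub b b') c)) (Cmul a' (Cmul b' (Csub c c')))).
Proof. destruct a, b, c, a', b', c'. unfold Csub, Cadd, Copp, Cmul; simpl. f_equal; ring. Qed.

Definition hatn_abs (k : Z) : Z := if (k =? 0)%Z then 1%Z else Z.abs k.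

Lemma cabs_hatn k : cabs (hatn k) = IZR (hatn_abs k).
Proof.
  unfold cabs, hatn, hatn_abs, Cnorm2. destruct (k =? 0)%Z; simpl.
  - replace (0 * 0 + -1 * -1) with 1 by ring. apply sqrt_1.
  - replace (IZR k * IZR k + 0 * 0) with (Rsqr (IZR k)) by (unfold Rsqr; ring).
    rewrite sqrt_Rsqr_abs. apply Rabs_Zabs.
Qed.

Lemma hatn_abs_pos k : (0 < k)%Z -> hatn_abs k = k.
Proof. intros Hk. unfold hatn_abs. destruct (Z.eqb_spec k 0); lia. Qed.

Lemma hatn_abs_ge1 k : (1 <= hatn_abs k)%Z.
Proof. unfold hatn_abs. destruct (Z.eqb_spec k 0); lia. Qed.

(* Since [n23 < 0], [n1 = n - n23 > n > 0]. Depending on the signs of [n2] and [n3],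
   [|Phi| >= 2 n |n23|], [|Phi| = 2 |n23| |n1 + n3|] or [|Phi| = 2 |n23| |n1 + n2|]. *)
Lemma Phi_dominates n n1 n2 n3 : n = (n1 + n2 + n3)%Z -> (0 < n)%Z -> (n2 + n3 < 0)%Z ->
  n3 <> 0%Z -> ((n1 + n2) * (n1 + n3) <> 0)%Z ->
  let X := (2 * Z.abs (n * (n2 + n3)))%Z in
  let Y := (4 * Z.abs (Phi n n1 n2 n3) * n1 * hatn_abs n2)%Z in
  (X * (1 + Z.abs n1) * (1 + Z.abs n2) <= Y \/
   X * (1 + Z.abs n2) * (1 + Z.abs (n - n2)) <= Y \/
   X * (1 + Z.abs n3) * (1 + Z.abs (n1 + n2)) <= Y)%Z.
Proof.
  intros En Hn Hq H3 H13 X Y; subst X Y.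
  remember (- (n2 + n3))%Z as q eqn:Eq.
  replace n1 with (n + q)%Z in * by lia. replace n3 with (- q - n2)%Z in * by lia.
  replace (Z.abs (n * (n2 + (- q - n2)))) with (n * q)%Z by (rewrite Z.abs_neq; nia).
  clear En Eq.
  unfold Phi, hatn_abs. rewrite (Z.abs_eq n), (Z.abs_eq (n + q)) by lia.
  destruct (Z.eqb_spec n2 0) as [->|Hn2].
  - left. rewrite (Z.abs_neq (- q - 0)) by lia. rewrite Z.abs_0.
    replace (n * n - (n + q) * (n + q) - 0 * 0 - (- q - 0) * - (- q - 0))%Z with (- (2 * n * q))%Z
      by ring.
    rewrite Z.abs_neq by nia. nia.
  - destruct (Z.lt_ge_cases n2 0) as [Hneg|Hpos].
    + rewrite (Z.abs_neq n2) by lia. destruct (Z.lt_ge_cases (- q - n2) 0).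
      * left. rewrite (Z.abs_neq (- q - n2)) by lia.
        replace (n * n - (n + q) * (n + q) - n2 * - n2 - (- q - n2) * - (- q - n2))%Z
          with (- (2 * n * q + 2 * n2 * (- q - n2)))%Z by ring.
        rewrite Z.abs_neq by nia. nia.
      * right; right. rewrite (Z.abs_eq (- q - n2)) by lia.
        replace (n * n - (n + q) * (n + q) - n2 * - n2 - (- q - n2) * (- q - n2))%Z
          with (-2 * q * (n + q + n2))%Z by ring.
        assert (n + q + n2 <> 0)%Z by (intro E; apply H13; rewrite E; ring).
        rewrite Z.abs_mul, (Z.abs_neq (-2 * q)) by lia.
        assert (1 + Z.abs (n + q + n2) <= 2 * Z.abs (n + q + n2))%Z by lia.
        assert (1 + (- q - n2) <= 2 * - n2)%Z by lia. nia.
    + right; left. rewrite (Z.abs_eq n2), (Z.abs_neq (- q - n2)) by lia.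
      replace (n * n - (n + q) * (n + q) - n2 * n2 - (- q - n2) * - (- q - n2))%Z
        with (-2 * q * (n - n2))%Z by ring.
      assert (n - n2 <> 0)%Z.
      { intro E; apply H13. replace (n + q + (- q - n2))%Z with (n - n2)%Z by ring. rewrite E; ring. }
      rewrite Z.abs_mul, (Z.abs_neq (-2 * q)) by lia.
      assert (1 + Z.abs (n - n2) <= 2 * Z.abs (n - n2))%Z by lia.
      assert (1 + n2 <= 2 * n2)%Z by lia. nia.
Qed.

Lemma div_le_rho_mul a b X P H1 H2 : 0 < H1 -> 0 < H2 ->
  X * (1 + IZR (Z.abs a)) * (1 + IZR (Z.abs b)) <= P * H1 * H2 ->
  X / (H1 * H2) <= P * (rho a * rho b).
Proof.
  intros h1 h2 H. unfold rho.
  pose proof (IZR_le _ _ (Z.abs_nonneg a)). pose proof (IZR_le _ _ (Z.abs_nonneg b)).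
  apply (Rmult_le_reg_r (H1 * H2 * ((1 + IZR (Z.abs a)) * (1 + IZR (Z.abs b))))).
  - repeat apply Rmult_lt_0_compat; lra.
  - replace (X / (H1 * H2) * (H1 * H2 * ((1 + IZR (Z.abs a)) * (1 + IZR (Z.abs b)))))
      with (X * (1 + IZR (Z.abs a)) * (1 + IZR (Z.abs b))) by (field; lra).
    replace (P * (/ (1 + IZR (Z.abs a)) * / (1 + IZR (Z.abs b))) *
             (H1 * H2 * ((1 + IZR (Z.abs a)) * (1 + IZR (Z.abs b))))) with (P * H1 * H2)
      by (field; lra).
    exact H.
Qed.

Lemma mt1_bound n n1 n2 : (0 < n)%Z ->
  mt1 n n1 n2 (n - n1 - n2) = C0 \/
  ((n < n1)%Z /\ cabs (mt1 n n1 n2 (n - n1 - n2))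
     <= 4 * Rabs (IZR (Phi n n1 n2 (n - n1 - n2))) * kernel_weight n n1 n2).
Proof.
  intros Hn. unfold mt1, m1.
  destruct (Z.eqb_spec ((n1 + n2) * (n1 + (n - n1 - n2))) 0) as [|H13]; [now left|].
  destruct (Z.ltb_spec 0 n); [|lia].
  destruct (Z.ltb_spec (n2 + (n - n1 - n2)) 0) as [Hq|]; [|now left].
  destruct (Z.eqb_spec (n - n1 - n2) 0) as [|H3]; [now left|]. simpl. right.
  assert (Hn1 : (n < n1)%Z) by lia. split; [exact Hn1|].
  pose proof (hatn_abs_ge1 n2) as Hh2. apply IZR_le in Hh2.
  assert (Hn1R : 0 < IZR n1) by (apply IZR_lt; lia).
  rewrite cabs_mul, cabs_im, cabs_inv.
  2:{ rewrite <- cabs_sq, cabs_mul, !cabs_hatn, (hatn_abs_pos n1) by lia.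
      apply pow_lt; nra. }
  rewrite cabs_mul, !cabs_hatn, hatn_abs_pos by lia.
  rewrite Rabs_mult, !Rabs_Zabs. change (IZR (Z.abs 2)) with 2.
  pose proof (Phi_dominates n n1 n2 (n - n1 - n2) ltac:(ring) Hn Hq H3 H13) as Hcases.
  cbv zeta in Hcases.
  assert (Hpair : forall a b, rho a * rho b <= kernel_weight n n1 n2 ->
    (2 * Z.abs (n * (n2 + (n - n1 - n2))) * (1 + Z.abs a) * (1 + Z.abs b)
       <= 4 * Z.abs (Phi n n1 n2 (n - n1 - n2)) * n1 * hatn_abs n2)%Z ->
    2 * IZR (Z.abs (n * (n2 + (n - n1 - n2)))) * / (IZR n1 * IZR (hatn_abs n2))
      <= 4 * IZR (Z.abs (Phi n n1 n2 (n - n1 - n2))) * kernel_weight n n1 n2).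
  { intros a b Hab Hz. apply IZR_le in Hz. rewrite !mult_IZR, !plus_IZR in Hz.
    pose proof (IZR_le _ _ (Z.abs_nonneg (Phi n n1 n2 (n - n1 - n2)))).
    eapply Rle_trans; [apply (div_le_rho_mul a b); [lra | lra | exact Hz]|].
    apply Rmult_le_compat_l; [lra | exact Hab]. }
  pose proof (rho_pos n1). pose proof (rho_pos n2). pose proof (rho_pos (n - n2)).
  pose proof (rho_pos (n - n1 - n2)). pose proof (rho_pos (n1 + n2)).
  destruct Hcases as [Hc|[Hc|Hc]]; eapply Hpair; try exact Hc; unfold kernel_weight; nra.
Qed.

Lemma jbr2s_pos s n : 0 < jbr2s s n.
Proof. unfold jbr2s, Rpower. apply exp_pos. Qed.

Lemma jbr2s_ge1 s n : 0 <= s -> 1 <= jbr2s s n.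
Proof.
  intros Hs. unfold jbr2s. pose proof (pow2_ge_0 (IZR n)).
  apply Rle_trans with (Rpower (1 + IZR n ^ 2) 0); [rewrite Rpower_O; lra | apply Rle_Rpower; lra].
Qed.

Lemma jbr2s_le s n n1 : 0 <= s -> (0 < n)%Z -> (n < n1)%Z -> jbr2s s n <= jbr2s s n1.
Proof.
  intros Hs H1 H2. unfold jbr2s. apply Rle_Rpower_l; auto.
  assert (0 < IZR n) by (apply IZR_lt; auto). assert (IZR n < IZR n1) by (apply IZR_lt; auto).
  split; nra.
Qed.

Lemma jbr2s_Cnorm2 s n z : jbr2s s n * Cnorm2 z = (sqrt (jbr2s s n) * cabs z) ^ 2.
Proof.
  rewrite Rpow_mult_distr, cabs_sq, <- Rsqr_pow2, Rsqr_sqrt; auto.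
  left; apply jbr2s_pos.
Qed.

Lemma weighted_mt1_bound s M n n1 n2 : 0 <= s -> (0 < n)%Z ->
  Rabs (IZR (Phi n n1 n2 (n - n1 - n2))) <= M ->
  sqrt (jbr2s s n) * cabs (mt1 n n1 n2 (n - n1 - n2))
    <= 4 * M * kernel_weight n n1 n2 * sqrt (jbr2s s n1).
Proof.
  intros Hs Hn HM.
  pose proof (kernel_weight_nonneg n n1 n2). pose proof (sqrt_pos (jbr2s s n1)).
  pose proof (Rabs_pos (IZR (Phi n n1 n2 (n - n1 - n2)))).
  destruct (mt1_bound n n1 n2 Hn) as [-> | [Hn1 Hm]].
  - rewrite cabs_C0, Rmult_0_r. repeat apply Rmult_le_pos; lra.
  - pose proof (sqrt_le_1_alt _ _ (jbr2s_le s n n1 Hs Hn Hn1)).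
    pose proof (sqrt_pos (jbr2s s n)). pose proof (cabs_nonneg (mt1 n n1 n2 (n - n1 - n2))).
    rewrite Rmult_comm. apply Rmult_le_compat; auto.
    eapply Rle_trans; [exact Hm|]. apply Rmult_le_compat_r; lra.
Qed.

Lemma resonant_term_bound s M n n1 n2 th X : 0 <= s -> 0 <= M -> (0 < n)%Z ->
  sqrt (jbr2s s n) * cabs (if Rle_dec (Rabs (IZR (Phi n n1 n2 (n - n1 - n2)))) M
     then Cmul (Cexpi th) (Cmul (mt1 n n1 n2 (n - n1 - n2)) X) else C0)
  <= 4 * M * kernel_weight n n1 n2 * sqrt (jbr2s s n1) * cabs X.
Proof.
  intros Hs M0 Hn. pose proof (cabs_nonneg X).
  destruct (Rle_dec _ _) as [HM|_].
  - rewrite !cabs_mul, cabs_expi, Rmult_1_l, <- Rmult_assoc.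
    apply Rmult_le_compat_r; auto. apply weighted_mt1_bound; auto.
  - rewrite cabs_C0, Rmult_0_r.
    pose proof (kernel_weight_nonneg n n1 n2). pose proof (sqrt_pos (jbr2s s n1)).
    repeat apply Rmult_le_pos; lra.
Qed.

Definition wabs (s : R) (v : Z -> Cx) (x : Z) : R := sqrt (jbr2s s x) * cabs (v x).

Definition integrand (s : R) (a b c : Z -> Cx) (n i j : Z) : R :=
  kernel_weight n i j * (wabs s a i * cabs (b j) * cabs (c (- (n - i - j)))%Z).

Definition majorant (s : R) (K : nat) (a b c : Z -> Cx) (n : Z) : R :=
  zsum K (fun i => zsum K (fun j => integrand s a b c n i j)).

Lemma integrand_nonneg s a b c n i j : 0 <= integrand s a b c n i j.
Proof.
  unfold integrand, wabs. pose proof (kernel_weight_nonneg n i j). pose proof (sqrt_pos (jbr2s s i)).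
  pose proof (cabs_nonneg (a i)). pose proof (cabs_nonneg (b j)).
  pose proof (cabs_nonneg (c (- (n - i - j)))%Z). repeat apply Rmult_le_pos; auto.
Qed.

Lemma majorant_nonneg s K a b c n : 0 <= majorant s K a b c n.
Proof. apply zsum_nonneg; intros; apply zsum_nonneg; intros; apply integrand_nonneg. Qed.

Lemma cabs_Cmul3 a b c : cabs (Cmul a (Cmul b c)) = cabs a * cabs b * cabs c.
Proof. rewrite !cabs_mul. ring. Qed.

Lemma NR_term_bound s M t v n n1 n2 : 0 <= s -> 0 <= M -> (0 < n)%Z ->
  sqrt (jbr2s s n) * cabs (NR_term M t v n n1 n2) <= 4 * M * integrand s v v v n n1 n2.
Proof.
  intros Hs M0 Hn. unfold NR_term. cbv zeta.
  eapply Rle_trans; [apply resonant_term_bound; auto|].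
  rewrite cabs_Cmul3. unfold star. rewrite cabs_conj. unfold integrand, wabs. right; ring.
Qed.

Lemma NR_term_diff_bound s M t w w' n n1 n2 : 0 <= s -> 0 <= M -> (0 < n)%Z ->
  let d := fun x => Csub (w x) (w' x) in
  sqrt (jbr2s s n) * cabs (Csub (NR_term M t w n n1 n2) (NR_term M t w' n n1 n2)) <=
  4 * M * (integrand s d w w n n1 n2 + integrand s w' d w n n1 n2 + integrand s w' w' d n n1 n2).
Proof.
  intros Hs M0 Hn d. unfold NR_term. cbv zeta.
  set (P := Phi n n1 n2 (n - n1 - n2)). set (mt := mt1 n n1 n2 (n - n1 - n2)).
  set (e := Cexpi (t * IZR P)).
  set (X := Cmul (w n1) (Cmul (w n2) (star w (n - n1 - n2)%Z))).
  set (X' := Cmul (w' n1) (Cmul (w' n2) (star w' (n - n1 - n2)%Z))).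
  replace (Csub (if Rle_dec (Rabs (IZR P)) M then Cmul e (Cmul mt X) else C0)
                (if Rle_dec (Rabs (IZR P)) M then Cmul e (Cmul mt X') else C0))
    with (if Rle_dec (Rabs (IZR P)) M then Cmul e (Cmul mt (Csub X X')) else C0)
    by (destruct (Rle_dec _ _), e, mt, X, X'; unfold Csub, Cadd, Copp, Cmul, C0; simpl;
        f_equal; ring).
  eapply Rle_trans; [apply resonant_term_bound; auto|].
  subst X X'. rewrite Csub_Cmul3.
  pose proof (kernel_weight_nonneg n n1 n2). pose proof (sqrt_pos (jbr2s s n1)).
  eapply Rle_trans.
  { apply Rmult_le_compat_l; [repeat apply Rmult_le_pos; lra|].
    eapply Rle_trans; [apply cabs_add | apply Rplus_le_compat_l, cabs_add]. }
  rewrite !cabs_Cmul3.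
  replace (Csub (star w (n - n1 - n2)%Z) (star w' (n - n1 - n2)%Z)) with (Cconj (d (- (n - n1 - n2))%Z))
    by (unfold star, d, Csub, Cadd, Copp, Cconj; simpl; f_equal; ring).
  unfold star. rewrite !cabs_conj. unfold integrand, wabs, d. right; ring.
Qed.

Lemma sums_bounded_wabs s a A : l2s_le s a A -> sums_bounded (fun x => wabs s a x ^ 2) (A ^ 2).
Proof.
  intros [_ H]. apply sums_bounded_of_zsum; [intros; apply pow2_ge_0|].
  intros K. rewrite (zsum_ext K _ (fun n => jbr2s s n * Cnorm2 (a n))); auto.
  intros x _. unfold wabs. rewrite jbr2s_Cnorm2. reflexivity.
Qed.

Lemma sums_bounded_cabs s b B : 0 <= s -> l2s_le s b B -> sums_bounded (fun x => cabs (b x) ^ 2) (B ^ 2).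
Proof.
  intros Hs [_ H]. apply sums_bounded_of_zsum; [intros; apply pow2_ge_0|].
  intros K. eapply Rle_trans; [|apply (H K)]. apply zsum_le. intros x _.
  rewrite cabs_sq. pose proof (jbr2s_ge1 s x Hs). pose proof (Cnorm2_nonneg (b x)). nra.
Qed.

Lemma sums_bounded_cabs_opp s c D : 0 <= s -> l2s_le s c D ->
  sums_bounded (fun x => cabs (c (- x)%Z) ^ 2) (D ^ 2).
Proof.
  intros Hs Hc a n. rewrite (isum_ext _ _ _ (fun x => cabs (c (0 - x)%Z) ^ 2)) by auto.
  exact (sums_bounded_reflect _ _ 0 (sums_bounded_cabs s c D Hs Hc) a n).
Qed.

Lemma majorant_l2_bound s K L a b c A B D : 0 <= s ->
  l2s_le s a A -> l2s_le s b B -> l2s_le s c D ->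
  zsum L (fun n => majorant s K a b c n ^ 2) <= 81 * (A ^ 2 * B ^ 2 * D ^ 2).
Proof.
  intros Hs Ha Hb Hc. rewrite zsum_isum.
  rewrite (isum_ext _ _ _ (fun n => trilinear (wabs s a) (fun x => cabs (b x))
      (fun x => cabs (c (- x)%Z)) (- Z.of_nat K) (- Z.of_nat K) (2 * K + 1) (2 * K + 1)
      kernel_weight n ^ 2))
    by (intros; unfold majorant, trilinear, integrand; rewrite zsum_isum;
        f_equal; apply isum_ext; intros; apply zsum_isum).
  apply trilinear_kernel_weight.
  - apply sums_bounded_wabs; auto.
  - apply (sums_bounded_cabs s); auto.
  - apply (sums_bounded_cabs_opp s); auto.
Qed.

Lemma majorant_le s K a A n : 0 <= s -> l2s_le s a A -> majorant s K a a a n <= 9 * A ^ 3.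
Proof.
  intros Hs Ha. pose proof (proj1 Ha) as A0.
  pose proof (majorant_l2_bound s K (Z.to_nat (Z.abs n)) a a a A A A Hs Ha Ha Ha).
  pose proof (zsum_term_le (Z.to_nat (Z.abs n)) (fun n => majorant s K a a a n ^ 2) n
                (fun _ => pow2_ge_0 _) ltac:(lia)).
  pose proof (majorant_nonneg s K a a a n). pose proof (pow_le A 3 A0).
  apply Rsqr_incr_0_var; [unfold Rsqr; nra | lra].
Qed.

Definition NR_box (M t : R) (K : nat) (v : Z -> Cx) (n : Z) : Cx :=
  if (0 <? n)%Z then NR_partial M t v n K else C0.

Lemma weighted_box_bound s K (g : Z -> Z -> Cx) (h : Z -> Z -> R) n :
  (forall i j, sqrt (jbr2s s n) * cabs (g i j) <= h i j) ->
  sqrt (jbr2s s n) * cabs (Czsum K (fun i => Czsum K (fun j => g i j)))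
    <= zsum K (fun i => zsum K (fun j => h i j)).
Proof.
  intros H. pose proof (sqrt_pos (jbr2s s n)).
  eapply Rle_trans; [apply Rmult_le_compat_l; [auto | apply cabs_Czsum]|].
  rewrite <- zsum_scal. apply zsum_le; intros i _.
  eapply Rle_trans; [apply Rmult_le_compat_l; [auto | apply cabs_Czsum]|].
  rewrite <- zsum_scal. apply zsum_le; intros j _. auto.
Qed.

Lemma NR_box_weighted_bound s M t K v n : 0 <= s -> 0 <= M ->
  sqrt (jbr2s s n) * cabs (NR_box M t K v n) <= 4 * M * majorant s K v v v n.
Proof.
  intros Hs M0. pose proof (majorant_nonneg s K v v v n). unfold NR_box.
  destruct (Z.ltb_spec 0 n) as [Hn|_].
  - unfold majorant. rewrite <- zsum_scal.
    rewrite (zsum_ext K _ (fun i => zsum K (fun j => 4 * M * integrand s v v v n i j)))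
      by (intros; rewrite zsum_scal; auto).
    apply weighted_box_bound. intros; apply NR_term_bound; auto.
  - rewrite cabs_C0, Rmult_0_r. nra.
Qed.

Lemma NR_box_diff_weighted_bound s M t K w w' n : 0 <= s -> 0 <= M ->
  let d := fun x => Csub (w x) (w' x) in
  sqrt (jbr2s s n) * cabs (Csub (NR_box M t K w n) (NR_box M t K w' n)) <=
  4 * M * (majorant s K d w w n + majorant s K w' d w n + majorant s K w' w' d n).
Proof.
  intros Hs M0 d.
  pose proof (majorant_nonneg s K d w w n). pose proof (majorant_nonneg s K w' d w n).
  pose proof (majorant_nonneg s K w' w' d n). unfold NR_box.
  destruct (Z.ltb_spec 0 n) as [Hn|_].
  - unfold NR_partial, majorant. rewrite Csub_Czsum.
    rewrite (Czsum_ext K _ (fun i => Czsum K (fun j =>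
        Csub (NR_term M t w n i j) (NR_term M t w' n i j)))) by (intros; apply Csub_Czsum).
    rewrite <- !zsum_plus, <- zsum_scal.
    rewrite (zsum_ext K _ (fun i => zsum K (fun j => 4 * M * (integrand s d w w n i j
        + integrand s w' d w n i j + integrand s w' w' d n i j))))
      by (intros; rewrite zsum_scal, !zsum_plus; auto).
    apply weighted_box_bound. intros; apply NR_term_diff_bound; auto.
  - replace (Csub C0 C0) with C0 by (unfold Csub, Cadd, Copp, C0; simpl; f_equal; ring).
    rewrite cabs_C0, Rmult_0_r. nra.
Qed.

Lemma NR_box_l2s_bound s M t K L v A : 0 <= s -> 0 <= M -> l2s_le s v A ->
  zsum L (fun n => jbr2s s n * Cnorm2 (NR_box M t K v n)) <= (36 * M * A ^ 3) ^ 2.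
Proof.
  intros Hs M0 Hv.
  apply Rle_trans with (zsum L (fun n => 16 * M ^ 2 * majorant s K v v v n ^ 2)).
  - apply zsum_le. intros n _. rewrite jbr2s_Cnorm2.
    pose proof (sqrt_pos (jbr2s s n)). pose proof (cabs_nonneg (NR_box M t K v n)).
    pose proof (NR_box_weighted_bound s M t K v n Hs M0).
    replace (16 * M ^ 2 * majorant s K v v v n ^ 2) with ((4 * M * majorant s K v v v n) ^ 2) by ring.
    apply pow_incr. split; [nra | auto].
  - rewrite zsum_scal. pose proof (majorant_l2_bound s K L v v v A A A Hs Hv Hv Hv).
    pose proof (pow2_ge_0 M). replace ((36 * M * A ^ 3) ^ 2) with (16 * M ^ 2 * (81 * (A ^ 2 * A ^ 2 * A ^ 2))) by ring.
    apply Rmult_le_compat_l; lra.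
Qed.

Lemma NR_box_diff_l2s_bound s M t K L w w' A B D : 0 <= s -> 0 <= M ->
  l2s_le s w A -> l2s_le s w' B -> l2s_le s (fun x => Csub (w x) (w' x)) D ->
  zsum L (fun n => jbr2s s n * Cnorm2 (Csub (NR_box M t K w n) (NR_box M t K w' n)))
    <= (63 * M * (A ^ 2 + B ^ 2) * D) ^ 2.
Proof.
  intros Hs M0 Hw Hw' Hd. set (d := fun x => Csub (w x) (w' x)) in *.
  apply Rle_trans with (zsum L (fun n => 48 * M ^ 2 *
    (majorant s K d w w n ^ 2 + majorant s K w' d w n ^ 2 + majorant s K w' w' d n ^ 2))).
  - apply zsum_le. intros n _. rewrite jbr2s_Cnorm2.
    pose proof (NR_box_diff_weighted_bound s M t K w w' n Hs M0) as Hb. cbv zeta in Hb.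
    pose proof (sqrt_pos (jbr2s s n)). pose proof (cabs_nonneg (Csub (NR_box M t K w n) (NR_box M t K w' n))).
    pose proof (majorant_nonneg s K d w w n). pose proof (majorant_nonneg s K w' d w n).
    pose proof (majorant_nonneg s K w' w' d n). pose proof (pow2_ge_0 M).
    set (x := majorant s K d w w n) in *. set (y := majorant s K w' d w n) in *.
    set (z := majorant s K w' w' d n) in *.
    apply Rle_trans with ((4 * M * (x + y + z)) ^ 2); [apply pow_incr; split; [nra | exact Hb]|].
    pose proof (sqr_sum3_le x y z).
    replace ((4 * M * (x + y + z)) ^ 2) with (16 * M ^ 2 * (x + y + z) ^ 2) by ring. nra.
  - rewrite zsum_scal, !zsum_plus.
    pose proof (majorant_l2_bound s K L d w w D A A Hs Hd Hw Hw).
    pose proof (majorant_l2_bound s K L w' d w B D A Hs Hw' Hd Hw).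
    pose proof (majorant_l2_bound s K L w' w' d B B D Hs Hw' Hw' Hd).
    pose proof (pow2_ge_0 M). pose proof (pow2_ge_0 A). pose proof (pow2_ge_0 B).
    pose proof (pow2_ge_0 D). pose proof (Rmult_le_pos _ _ (pow2_ge_0 A) (pow2_ge_0 B)).
    apply Rle_trans with (3888 * M ^ 2 * D ^ 2 * (A ^ 2 * A ^ 2 + A ^ 2 * B ^ 2 + B ^ 2 * B ^ 2)).
    + replace (3888 * M ^ 2 * D ^ 2 * (A ^ 2 * A ^ 2 + A ^ 2 * B ^ 2 + B ^ 2 * B ^ 2))
        with (48 * M ^ 2 * (81 * (D ^ 2 * A ^ 2 * A ^ 2) + 81 * (B ^ 2 * D ^ 2 * A ^ 2)
              + 81 * (B ^ 2 * B ^ 2 * D ^ 2))) by ring.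
      apply Rmult_le_compat_l; lra.
    + replace ((63 * M * (A ^ 2 + B ^ 2) * D) ^ 2)
        with (3969 * M ^ 2 * D ^ 2 * (A ^ 2 * A ^ 2 + 2 * (A ^ 2 * B ^ 2) + B ^ 2 * B ^ 2)) by ring.
      pose proof (Rmult_le_pos _ _ (pow2_ge_0 M) (pow2_ge_0 D)).
      pose proof (Rmult_le_pos _ _ (pow2_ge_0 (A ^ 2)) (pow2_ge_0 (B ^ 2))). nra.
Qed.

Definition box_sum (K : nat) (g : Z -> Z -> R) : R := zsum K (fun i => zsum K (fun j => g i j)).

Lemma box_sum_S_restrict K g : box_sum K g =
  box_sum (S K) (fun i j => if ((Z.abs i <=? Z.of_nat K) && (Z.abs j <=? Z.of_nat K))%Z%bool
                            then g i j else 0).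
Proof.
  unfold box_sum. rewrite <- zsum_S_restrict. apply zsum_ext. intros i _.
  destruct (Z.abs i <=? Z.of_nat K)%Z.
  - rewrite <- zsum_S_restrict. reflexivity.
  - rewrite zsum_isum, isum_0. reflexivity.
Qed.

Lemma zsum_Rabs_le K f g : (forall x, Rabs (f x) <= g x) -> Rabs (zsum K f) <= zsum K g.
Proof.
  intros H.
  assert (Hx : forall x, - g x <= f x <= g x)
    by (intros x; specialize (H x); unfold Rabs in H; destruct (Rcase_abs (f x)); lra).
  apply Rabs_le. split.
  - rewrite <- (Rmult_1_l (zsum K g)), Ropp_mult_distr_l, <- zsum_scal.
    apply zsum_le. intros x _. specialize (Hx x). lra.
  - apply zsum_le. intros x _. apply Hx.
Qed.

Lemma box_sum_S_diff_le K g h : (forall i j, Rabs (g i j) <= h i j) ->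
  Rabs (box_sum (S K) g - box_sum K g) <= box_sum (S K) h - box_sum K h.
Proof.
  intros H. rewrite (box_sum_S_restrict K g), (box_sum_S_restrict K h). unfold box_sum.
  rewrite <- !zsum_minus. apply zsum_Rabs_le. intros i.
  rewrite <- !zsum_minus. apply zsum_Rabs_le. intros j.
  destruct (_ && _)%bool; [rewrite !Rminus_diag, Rabs_R0; lra|].
  rewrite !Rminus_0_r. auto.
Qed.

Lemma box_sum_S_le K h : (forall i j, 0 <= h i j) -> box_sum K h <= box_sum (S K) h.
Proof.
  intros H. unfold box_sum. eapply Rle_trans.
  - apply zsum_le. intros i _. apply zsum_S_le. auto.
  - apply zsum_S_le. intros; apply zsum_nonneg; auto.
Qed.

Lemma box_sum_diff_le K p g h : (forall i j, Rabs (g i j) <= h i j) ->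
  Rabs (box_sum (K + p) g - box_sum K g) <= box_sum (K + p) h - box_sum K h.
Proof.
  intros H. induction p as [|p IH].
  - rewrite Nat.add_0_r, !Rminus_diag, Rabs_R0. lra.
  - rewrite Nat.add_succ_r. pose proof (box_sum_S_diff_le (K + p) g h H).
    replace (box_sum (S (K + p)) g - box_sum K g)
      with ((box_sum (S (K + p)) g - box_sum (K + p) g) + (box_sum (K + p) g - box_sum K g)) by ring.
    eapply Rle_trans; [apply Rabs_triang | lra].
Qed.

(* The box sums of [h] increase to a limit and their increments dominate those of [g]. *)
Lemma box_sum_cv_of_dominated g h X : (forall i j, Rabs (g i j) <= h i j) ->
  (forall K, box_sum K h <= X) -> exists l, Un_cv (fun K => box_sum K g) l.
Proof.
  intros H HX.
  assert (h0 : forall i j, 0 <= h i j) by (intros i j; pose proof (H i j); pose proof (Rabs_pos (g i j)); lra).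
  destruct (growing_cv (fun K => box_sum K h)) as [lh Hlh].
  { intros K. apply box_sum_S_le; auto. }
  { exists X. intros y [K ->]. auto. }
  pose proof (CV_Cauchy _ (exist _ lh Hlh)) as Hc.
  assert (Hg : Cauchy_crit (fun K => box_sum K g)).
  { intros eps Heps. destruct (Hc eps Heps) as [N HN]. exists N. intros n m Hn Hm.
    specialize (HN n m Hn Hm). unfold R_dist in *.
    destruct (Nat.le_ge_cases n m) as [Hnm|Hnm].
    - replace m with (n + (m - n))%nat in * by lia.
      pose proof (box_sum_diff_le n (m - n) g h H).
      rewrite Rabs_minus_sym. rewrite Rabs_minus_sym in HN.
      eapply Rle_lt_trans; [|apply HN]. eapply Rle_trans; [eassumption | apply Rle_abs].
    - replace n with (m + (n - m))%nat in * by lia.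
      pose proof (box_sum_diff_le m (n - m) g h H).
      eapply Rle_lt_trans; [|apply HN]. eapply Rle_trans; [eassumption | apply Rle_abs]. }
  destruct (R_complete _ Hg) as [l Hl]. exists l; auto.
Qed.

Lemma NR_partial_cv s M t v A n : 0 <= s -> 0 <= M -> l2s_le s v A -> (0 < n)%Z ->
  exists z, Cx_cv (fun K => NR_partial M t v n K) z.
Proof.
  intros Hs M0 Hv Hn.
  assert (Hdom : forall K, box_sum K (fun i j => cabs (NR_term M t v n i j)) <= 4 * M * (9 * A ^ 3)).
  { intros K. eapply Rle_trans; [|apply Rmult_le_compat_l; [lra | apply (majorant_le s K v A n Hs Hv)]].
    unfold box_sum, majorant. rewrite <- zsum_scal. apply zsum_le; intros i _.
    rewrite <- zsum_scal. apply zsum_le; intros j _.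
    eapply Rle_trans; [|apply (NR_term_bound s M t); auto].
    pose proof (jbr2s_ge1 s n Hs). pose proof (cabs_nonneg (NR_term M t v n i j)).
    assert (1 <= sqrt (jbr2s s n)) by (rewrite <- sqrt_1 at 1; apply sqrt_le_1_alt; auto). nra. }
  destruct (box_sum_cv_of_dominated (fun i j => fst (NR_term M t v n i j)) _ _
              (fun i j => Rabs_fst_le_cabs _) Hdom) as [l1 H1].
  destruct (box_sum_cv_of_dominated (fun i j => snd (NR_term M t v n i j)) _ _
              (fun i j => Rabs_snd_le_cabs _) Hdom) as [l2 H2].
  exists (l1, l2). split; simpl.
  - eapply Un_cv_ext; [|apply H1]. intros K. unfold NR_partial, box_sum. rewrite fst_Czsum.
    apply zsum_ext. intros; rewrite fst_Czsum; auto.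
  - eapply Un_cv_ext; [|apply H2]. intros K. unfold NR_partial, box_sum. rewrite snd_Czsum.
    apply zsum_ext. intros; rewrite snd_Czsum; auto.
Qed.

Lemma Un_cv_const (c : R) : Un_cv (fun _ => c) c.
Proof. intros eps Heps. exists 0%nat. intros. unfold R_dist. rewrite Rminus_diag, Rabs_R0. lra. Qed.

Lemma Un_cv_zsum (u : nat -> Z -> R) (lim : Z -> R) L :
  (forall n, Un_cv (fun K => u K n) (lim n)) -> Un_cv (fun K => zsum L (u K)) (zsum L lim).
Proof.
  intros H. unfold zsum. induction (zrange L) as [|a l IH]; simpl.
  - apply Un_cv_const.
  - apply CV_plus; auto.
Qed.

Lemma Cx_cv_Cnorm2 (u : nat -> Cx) z : Cx_cv u z -> Un_cv (fun K => Cnorm2 (u K)) (Cnorm2 z).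
Proof. intros [H1 H2]. unfold Cnorm2. apply CV_plus; apply CV_mult; auto. Qed.

Lemma Cx_cv_Csub (u v : nat -> Cx) z w :
  Cx_cv u z -> Cx_cv v w -> Cx_cv (fun K => Csub (u K) (v K)) (Csub z w).
Proof. intros [H1 H2] [H3 H4]. split; simpl; apply CV_plus; auto; apply CV_opp; auto. Qed.

Lemma l2s_le_weaken s v A A' : l2s_le s v A -> A <= A' -> l2s_le s v A'.
Proof.
  intros [HA H] HAA'. split; [lra|]. intros K. eapply Rle_trans; [apply H|].
  apply pow_incr; lra.
Qed.

Lemma l2s_le_of_cv s (u : nat -> Z -> Cx) z X : 0 <= X ->
  (forall n, Cx_cv (fun K => u K n) (z n)) ->
  (forall K L, zsum L (fun n => jbr2s s n * Cnorm2 (u K n)) <= X ^ 2) -> l2s_le s z X.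
Proof.
  intros HX Hcv Hbound. split; [exact HX|]. intros L.
  apply (Rle_cv_lim (Un := fun K => zsum L (fun n => jbr2s s n * Cnorm2 (u K n)))
                    (Vn := fun _ => X ^ 2)); [intros K; apply Hbound | | apply Un_cv_const].
  apply Un_cv_zsum. intros n. apply (CV_mult (fun _ => jbr2s s n)); [apply Un_cv_const|].
  apply Cx_cv_Cnorm2, Hcv.
Qed.

Lemma NR_box_cv M T w N t n : is_NR M T w N -> 0 <= t <= T ->
  Cx_cv (fun K => NR_box M t K (w t) n) (N t n).
Proof.
  intros HN Ht. destruct (HN t Ht n) as [H1 H2]. unfold NR_box.
  destruct (Z.ltb_spec 0 n) as [Hn|Hn].
  - apply H1, Hn.
  - rewrite H2 by exact Hn. split; apply Un_cv_const.
Qed.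

Lemma NR_exists s M T w : 0 <= s -> 0 <= M -> in_CTl2s s T w -> exists N, is_NR M T w N.
Proof.
  intros Hs M0 [Hw _].
  assert (H : forall t n, {z : Cx |
    (0 <= t <= T -> (0 < n)%Z -> Cx_cv (fun K => NR_partial M t (w t) n K) z) /\
    ((n <= 0)%Z -> z = C0)}).
  { intros t n. apply constructive_indefinite_description.
    destruct (Z_lt_le_dec 0 n) as [Hn|Hn]; [|exists C0; split; [intros; lia | auto]].
    destruct (excluded_middle_informative (0 <= t <= T)) as [Ht|Ht];
      [|exists C0; split; [tauto | intros; lia]].
    destruct (Hw t Ht) as [A HA].
    destruct (NR_partial_cv s M t (w t) A n Hs M0 HA Hn) as [z Hz].
    exists z. split; [auto | intros; lia]. }
  exists (fun t n => proj1_sig (H t n)). intros t Ht n.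
  destruct (proj2_sig (H t n)) as [H1 H2]. split; auto.
Qed.

Lemma NR_l2s_bound s M T w N A : 0 <= s -> 0 <= M -> is_NR M T w N ->
  (forall t, 0 <= t <= T -> l2s_le s (w t) A) ->
  forall t, 0 <= t <= T -> l2s_le s (N t) (36 * M * A ^ 3).
Proof.
  intros Hs M0 HN HA t Ht. pose proof (pow_le A 3 (proj1 (HA t Ht))).
  apply (l2s_le_of_cv s (fun K n => NR_box M t K (w t) n)).
  - apply Rmult_le_pos; [lra | auto].
  - intros n. apply (NR_box_cv M T); auto.
  - intros K L. apply NR_box_l2s_bound; auto.
Qed.

Lemma NR_l2s_lipschitz s M T w w' N N' A B D : 0 <= s -> 0 <= M ->
  is_NR M T w N -> is_NR M T w' N' ->
  (forall t, 0 <= t <= T -> l2s_le s (w t) A) ->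
  (forall t, 0 <= t <= T -> l2s_le s (w' t) B) ->
  (forall t, 0 <= t <= T -> l2s_le s (fun n => Csub (w t n) (w' t n)) D) ->
  forall t, 0 <= t <= T -> l2s_le s (fun n => Csub (N t n) (N' t n)) (63 * M * (A ^ 2 + B ^ 2) * D).
Proof.
  intros Hs M0 HN HN' HA HB HD t Ht.
  pose proof (proj1 (HD t Ht)). pose proof (pow2_ge_0 A). pose proof (pow2_ge_0 B).
  apply (l2s_le_of_cv s (fun K n => Csub (NR_box M t K (w t) n) (NR_box M t K (w' t) n))).
  - repeat apply Rmult_le_pos; lra.
  - intros n. apply Cx_cv_Csub; apply (NR_box_cv M T); auto.
  - intros K L. apply NR_box_diff_l2s_bound; auto.
Qed.

Theorem lemma3p2 (s : R) (hs : 0 <= s) :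
  exists C : R, 0 < C /\
  forall M T : R, 0 < M -> 0 < T ->
    (forall w, in_CTl2s s T w -> exists N, is_NR M T w N) /\
    (forall w N A, in_CTl2s s T w -> is_NR M T w N ->
       (forall t, 0 <= t <= T -> l2s_le s (w t) A) ->
       forall t, 0 <= t <= T -> l2s_le s (N t) (C * M * A ^ 3)) /\
    (forall w w' N N' A B D, in_CTl2s s T w -> in_CTl2s s T w' ->
       is_NR M T w N -> is_NR M T w' N' ->
       (forall t, 0 <= t <= T -> l2s_le s (w t) A) ->
       (forall t, 0 <= t <= T -> l2s_le s (w' t) B) ->
       (forall t, 0 <= t <= T -> l2s_le s (fun n => Csub (w t n) (w' t n)) D) ->
       forall t, 0 <= t <= T ->
         l2s_le s (fun n => Csub (N t n) (N' t n)) (C * M * (A ^ 2 + B ^ 2) * D)).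
Proof.
  exists 63. split; [lra|]. intros M T HM HT. split; [|split].
  - intros w Hw. apply (NR_exists s); auto; lra.
  - intros w N A _ HN HA t Ht.
    apply (l2s_le_weaken _ _ (36 * M * A ^ 3)); [apply (NR_l2s_bound s M T w); auto; lra|].
    pose proof (pow_le A 3 (proj1 (HA t Ht))). nra.
  - intros w w' N N' A B D _ _ HN HN' HA HB HD.
    apply (NR_l2s_lipschitz s M T w w'); auto; lra.
Qed.
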